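(* Let $k\in\mathbb{N}$ and let $x_1,\ldots,x_k$ be positive reals with $x_1+\cdots+x_k<1$, $x_1\ge x_2\ge\cdots\ge x_k$, and $x_1\cdots x_j \le 1 - \sum_{i=1}^j x_i$ for all $j\in\{1,\ldots,k\}$. Then \[ x_1+\cdots+x_k \le \frac1{s_1}+\cdots+\frac1{s_k}, \] with equality if and only if $x_i = 1/s_i$ for all $i\in\{1,\ldots,k\}$.
   Context: The Sylvester sequence: $s_1 = 2$, $s_i = \prod_{j=1}^{i-1} s_j + 1$ for $i\ge2$. *)

From Stdlib Require Import Reals Arith List.
Open Scope R_scope.

(* Sylvester sequence, 1-indexed: sylv 1 = 2, sylv i = prod_{j<i} sylv j + 1.
   Auxiliary: sylv_prod n = prod_{j=1}^{n} sylv j (empty product = 1).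
   Then sylv (n+1) = sylv_prod n + 1 and sylv_prod (n+1) = sylv_prod n * sylv (n+1). *)
Fixpoint sylv_prod (n : nat) : nat :=
  match n with
  | O => 1%nat
  | S m => (sylv_prod m * (sylv_prod m + 1))%nat
  end.

Definition sylv (i : nat) : nat := (sylv_prod (Nat.pred i) + 1)%nat.

Fixpoint sum1 (f : nat -> R) (j : nat) : R :=
  match j with O => 0 | S m => sum1 f m + f (S m) end.
Fixpoint prod1 (f : nat -> R) (j : nat) : R :=
  match j with O => 1 | S m => prod1 f m * f (S m) end.

Example sylv_check : List.map sylv (1::2::3::4::5::nil)%nat = (2::3::7::43::1807::nil)%nat.
Proof. reflexivity. Qed.

From Stdlib Require Import Reals Arith Lra Lia Psatz.
Open Scope R_scope.

(* Write a_i = 1/s_i and Q_j = s_1 ... s_j, so that a_1 ... a_j = 1/Q_j and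
   a_1 + ... + a_j = 1 - 1/Q_j.  The proof combines two facts.

   (1) A majorization inequality: if b_1 >= ... >= b_n > 0, c_i > 0 and
       b_1 ... b_l <= c_1 ... c_l for every l, then sum b <= sum c, with
       equality only if b = c.  It follows from b - c <= b (ln b - ln c)
       (the tangent-line bound for exp) and Abel summation, since the
       partial sums of ln b_i - ln c_i are nonpositive.

   (2) Strong induction on k.  If a_1 ... a_k < x_1 ... x_k, the hypothesis
       on products gives sum x <= 1 - prod x < 1 - 1/Q_k = sum a directly.
       Otherwise take the last index j < k with a_1 ... a_j <= x_1 ... x_j:
       the induction hypothesis handles the first j terms, and dividing the
       later product inequalities by the one at j puts the tail
       x_(j+1), ..., x_k, a_(j+1), ..., a_k under the hypotheses of (1). *)

Lemma sum1_ext (f g : nat -> R) (n : nat) :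
  (forall i, (1 <= i <= n)%nat -> f i = g i) -> sum1 f n = sum1 g n.
Proof.
  induction n as [|n IH]; intros H; simpl; [reflexivity|].
  rewrite IH by (intros; apply H; lia). rewrite H by lia. reflexivity.
Qed.

Lemma sum1_minus (f g : nat -> R) (n : nat) :
  sum1 (fun i => f i - g i) n = sum1 f n - sum1 g n.
Proof. induction n as [|n IH]; simpl; [ring|]. rewrite IH. ring. Qed.

Lemma sum1_nonneg (g : nat -> R) (n : nat) :
  (forall i, (1 <= i <= n)%nat -> 0 <= g i) -> 0 <= sum1 g n.
Proof.
  induction n as [|n IH]; intros H; simpl; [lra|].
  assert (0 <= g (S n)) by (apply H; lia).
  assert (0 <= sum1 g n) by (apply IH; intros; apply H; lia). lra.
Qed.

Lemma sum1_nonneg_zero (g : nat -> R) (n : nat) :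
  (forall i, (1 <= i <= n)%nat -> 0 <= g i) -> sum1 g n <= 0 ->
  forall i, (1 <= i <= n)%nat -> g i = 0.
Proof.
  induction n as [|n IH]; intros H Hs i Hi; [lia|].
  simpl in Hs.
  assert (0 <= sum1 g n) by (apply sum1_nonneg; intros; apply H; lia).
  assert (0 <= g (S n)) by (apply H; lia).
  destruct (Nat.eq_dec i (S n)) as [->|ne]; [lra|].
  apply IH; [intros; apply H; lia | lra | lia].
Qed.

Lemma sum1_split (f : nat -> R) (j n : nat) :
  sum1 f (j + n) = sum1 f j + sum1 (fun i => f (j + i)%nat) n.
Proof.
  induction n as [|n IH]; simpl.
  - rewrite Nat.add_0_r. ring.
  - rewrite Nat.add_succ_r. simpl. rewrite IH. ring.
Qed.

Lemma prod1_split (f : nat -> R) (j n : nat) :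
  prod1 f (j + n) = prod1 f j * prod1 (fun i => f (j + i)%nat) n.
Proof.
  induction n as [|n IH]; simpl.
  - rewrite Nat.add_0_r. ring.
  - rewrite Nat.add_succ_r. simpl. rewrite IH. ring.
Qed.

Lemma prod1_pos (f : nat -> R) (n : nat) :
  (forall i, (1 <= i <= n)%nat -> 0 < f i) -> 0 < prod1 f n.
Proof.
  induction n as [|n IH]; intros H; simpl; [lra|].
  apply Rmult_lt_0_compat; [apply IH; intros; apply H; lia | apply H; lia].
Qed.

Lemma ln_prod1 (f : nat -> R) (n : nat) :
  (forall i, (1 <= i <= n)%nat -> 0 < f i) ->
  ln (prod1 f n) = sum1 (fun i => ln (f i)) n.
Proof.
  induction n as [|n IH]; intros H; simpl; [apply ln_1|].
  rewrite ln_mult; [| apply prod1_pos; intros; apply H; lia | apply H; lia].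
  rewrite IH by (intros; apply H; lia). reflexivity.
Qed.

Lemma prod1_shift_le (b c : nat -> R) (j l : nat) :
  0 < prod1 c j -> prod1 c j <= prod1 b j ->
  0 < prod1 (fun i => c (j + i)%nat) l ->
  prod1 b (j + l) <= prod1 c (j + l) ->
  prod1 (fun i => b (j + i)%nat) l <= prod1 (fun i => c (j + i)%nat) l.
Proof.
  intros hc hcb htail hle. rewrite !prod1_split in hle.
  destruct (Rle_lt_dec (prod1 (fun i => b (j + i)%nat) l)
                       (prod1 (fun i => c (j + i)%nat) l)) as [h|h]; [exact h|].
  exfalso. nra.
Qed.

Lemma last_index (P : nat -> Prop) (Pdec : forall n, {P n} + {~ P n}) :
  P 0%nat -> forall k, exists j, (j <= k)%nat /\ P j /\
                            forall i, (j < i <= k)%nat -> ~ P i.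
Proof.
  intros P0 k. induction k as [|k IH].
  - exists 0%nat. repeat split; [lia | exact P0 | intros; lia].
  - destruct (Pdec (S k)) as [h|h].
    + exists (S k). repeat split; [lia | exact h | intros; lia].
    + destruct IH as [j [h1 [h2 h3]]]. exists j. repeat split; [lia | exact h2 |].
      intros i hi. destruct (Nat.eq_dec i (S k)) as [->|ne]; [exact h|].
      apply h3; lia.
Qed.

(* Tangent-line bound for the logarithm: u - v <= u (ln u - ln v) for
   u, v > 0, strictly unless u = v (from 1 + w <= exp w with w = ln (v/u)). *)
Lemma ln_tangent (u v : R) : 0 < u -> 0 < v ->
  u - v <= u * (ln u - ln v) /\ (u <> v -> u - v < u * (ln u - ln v)).
Proof.
  intros hu hv.
  set (w := ln v - ln u).
  assert (Ew : u * exp w = v).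
  { unfold w, Rminus. rewrite exp_plus, exp_Ropp, !exp_ln by lra. field. lra. }
  split.
  - assert (1 + w <= exp w) by apply exp_ineq1_le.
    unfold w in *. nra.
  - intros hne.
    assert (w <> 0).
    { intro h0. apply hne. apply ln_inv; unfold w in h0; lra. }
    assert (1 + w < exp w) by (apply exp_ineq1; assumption).
    unfold w in *. nra.
Qed.

Lemma abel_inequality (b L : nat -> R) (n : nat) :
  (forall i, (1 <= i < n)%nat -> b (S i) <= b i) ->
  (forall l, (l <= n)%nat -> sum1 L l <= 0) ->
  sum1 (fun i => b i * L i) n <= b n * sum1 L n.
Proof.
  induction n as [|n IH]; intros hdec hL; simpl; [lra|].
  assert (IHn : sum1 (fun i => b i * L i) n <= b n * sum1 L n)
    by (apply IH; intros; [apply hdec | apply hL]; lia).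
  destruct n as [|n]; [simpl in *; lra|].
  assert (b (S (S n)) <= b (S n)) by (apply hdec; lia).
  assert (sum1 L (S n) <= 0) by (apply hL; lia).
  nra.
Qed.

Lemma prefix_product_majorization (n : nat) (b c : nat -> R)
  (hb : forall i, (1 <= i <= n)%nat -> 0 < b i)
  (hc : forall i, (1 <= i <= n)%nat -> 0 < c i)
  (hdec : forall i, (1 <= i < n)%nat -> b (S i) <= b i)
  (hprod : forall l, (1 <= l <= n)%nat -> prod1 b l <= prod1 c l) :
  sum1 b n <= sum1 c n /\
  (sum1 b n = sum1 c n -> forall i, (1 <= i <= n)%nat -> b i = c i).
Proof.
  set (L := fun i => ln (b i) - ln (c i)).
  assert (hL : forall l, (l <= n)%nat -> sum1 L l <= 0).
  { intros l hl. unfold L. rewrite sum1_minus.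
    rewrite <- (ln_prod1 b) by (intros; apply hb; lia).
    rewrite <- (ln_prod1 c) by (intros; apply hc; lia).
    destruct l as [|l]; [simpl; lra|].
    assert (0 < prod1 b (S l)) by (apply prod1_pos; intros; apply hb; lia).
    destruct (Rle_lt_or_eq_dec _ _ (hprod (S l) ltac:(lia))) as [hlt|heq].
    - assert (ln (prod1 b (S l)) < ln (prod1 c (S l))) by (apply ln_increasing; lra).
      lra.
    - rewrite heq. lra. }
  assert (hweighted : sum1 (fun i => b i * L i) n <= 0).
  { pose proof (abel_inequality b L n hdec hL) as habel.
    pose proof (hL n (le_n n)).
    destruct n as [|n]; [simpl; lra|].
    assert (0 < b (S n)) by (apply hb; lia). nra. }
  set (gap := fun i => b i * L i - (b i - c i)).
  assert (hgap : forall i, (1 <= i <= n)%nat -> 0 <= gap i).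
  { intros i hi. unfold gap, L.
    destruct (ln_tangent (b i) (c i)); [apply hb; lia | apply hc; lia | lra]. }
  assert (hsum_gap : sum1 gap n = sum1 (fun i => b i * L i) n - (sum1 b n - sum1 c n)).
  { unfold gap. rewrite sum1_minus, sum1_minus. reflexivity. }
  assert (0 <= sum1 gap n) by (apply sum1_nonneg; exact hgap).
  split; [lra|].
  intros E i hi.
  assert (gap i = 0) by (apply (sum1_nonneg_zero gap n); [exact hgap | lra | exact hi]).
  destruct (Req_dec (b i) (c i)) as [e|ne]; [exact e|].
  destruct (ln_tangent (b i) (c i)) as [_ hstrict]; [apply hb; lia | apply hc; lia |].
  specialize (hstrict ne). unfold gap, L in *. lra.
Qed.

Definition sylv_inv (i : nat) : R := / INR (sylv i).
Definition sylv_Q (j : nat) : R := INR (sylv_prod j).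

Lemma sylv_Q_ge1 (j : nat) : 1 <= sylv_Q j.
Proof.
  unfold sylv_Q. apply (le_INR 1).
  induction j as [|j IH]; simpl; nia.
Qed.

Lemma sylv_inv_pos (i : nat) : 0 < sylv_inv i.
Proof.
  unfold sylv_inv, sylv. apply Rinv_0_lt_compat. rewrite plus_INR. simpl.
  pose proof (pos_INR (sylv_prod (Nat.pred i))). lra.
Qed.

Lemma sylv_inv_prod_sum (j : nat) :
  prod1 sylv_inv j = / sylv_Q j /\ sum1 sylv_inv j = 1 - / sylv_Q j.
Proof.
  induction j as [|j [hprod hsum]]; simpl.
  - unfold sylv_Q; simpl. split; field.
  - rewrite hprod, hsum.
    assert (hQ : sylv_Q (S j) = sylv_Q j * (sylv_Q j + 1)).
    { unfold sylv_Q. simpl. rewrite mult_INR, plus_INR. reflexivity. }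
    assert (ha : sylv_inv (S j) = / (sylv_Q j + 1)).
    { unfold sylv_inv, sylv_Q, sylv. simpl. rewrite plus_INR. reflexivity. }
    rewrite hQ, ha. pose proof (sylv_Q_ge1 j). split; field; lra.
Qed.

Lemma sylvester_majorant (k : nat) : forall (x : nat -> R),
  (forall i, (1 <= i <= k)%nat -> 0 < x i) ->
  (forall i, (1 <= i < k)%nat -> x (S i) <= x i) ->
  (forall j, (1 <= j <= k)%nat -> prod1 x j <= 1 - sum1 x j) ->
  sum1 x k <= sum1 sylv_inv k /\
  (sum1 x k = sum1 sylv_inv k -> forall i, (1 <= i <= k)%nat -> x i = sylv_inv i).
Proof.
  induction k as [k IH] using lt_wf_ind; intros x hpos hdec hprod.
  destruct (Nat.eq_dec k 0) as [->|hk]; [simpl; split; [lra | intros; lia]|].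
  destruct (sylv_inv_prod_sum k) as [hpa hsa].
  destruct (Rlt_le_dec (prod1 sylv_inv k) (prod1 x k)) as [hbig|hsmall].
  { (* x overtakes the Sylvester products at k: the sum bound is strict. *)
    assert (prod1 x k <= 1 - sum1 x k) by (apply hprod; lia).
    split; [lra | intros; lra]. }
  destruct (last_index (fun j => prod1 sylv_inv j <= prod1 x j)
              (fun j => Rle_dec _ _) ltac:(simpl; lra) (k - 1))
    as [j [hjk [hcross hafter]]].
  destruct (IH j ltac:(lia) x) as [IHle IHeq];
    [intros; apply hpos; lia | intros; apply hdec; lia | intros; apply hprod; lia |].
  assert (hbelow : forall l, (j < l <= k)%nat -> prod1 x l <= prod1 sylv_inv l).
  { intros l hl. destruct (Nat.eq_dec l k) as [->|ne]; [exact hsmall|].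
    apply Rlt_le, Rnot_le_lt, (hafter l). lia. }
  destruct (prefix_product_majorization (k - j)
              (fun i => x (j + i)%nat) (fun i => sylv_inv (j + i)%nat)) as [Tle Teq].
  - intros; apply hpos; lia.
  - intros; apply sylv_inv_pos.
  - intros i hi. replace (j + S i)%nat with (S (j + i)) by lia. apply hdec; lia.
  - intros l hl. apply prod1_shift_le; [| exact hcross | | apply hbelow; lia];
      apply prod1_pos; intros; apply sylv_inv_pos.
  - assert (ek : k = (j + (k - j))%nat) by lia.
    rewrite ek, !sum1_split. rewrite <- ek.
    split; [lra|].
    intros E i hi.
    destruct (le_lt_dec i j) as [h|h]; [apply IHeq; [lra | lia]|].
    replace i with (j + (i - j))%nat by lia.
    apply Teq; [lra | lia].
Qed.

Theorem mainTheorem14 (k : nat) (x : nat -> R)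
  (hpos : forall i, (1 <= i <= k)%nat -> 0 < x i)
  (hsum : sum1 x k < 1)
  (hdec : forall i, (1 <= i < k)%nat -> x (S i) <= x i)
  (hprod : forall j, (1 <= j <= k)%nat -> prod1 x j <= 1 - sum1 x j) :
  sum1 x k <= sum1 (fun i => / INR (sylv i)) k /\
  (sum1 x k = sum1 (fun i => / INR (sylv i)) k <->
     forall i, (1 <= i <= k)%nat -> x i = / INR (sylv i)).
Proof.
  destruct (sylvester_majorant k x hpos hdec hprod) as [hle heq].
  split; [exact hle|].
  split; [exact heq | apply sum1_ext].
Qed.
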